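(* Let $a_1,\dots,a_k$ be non-negative integers with $\gcd(a_1,\dots,a_k)=1$, let $S=\langle a_1,\dots,a_k\rangle$ and $G(S)=\mathbb{Z}_{\geq0}\setminus S$. Let $I=\langle y_1-x^{a_1},\dots,y_k-x^{a_k}\rangle\subset\mathbb{Q}[x,y_1,\dots,y_k]$ and let $\mathcal{B}=\{g_1,\dots,g_r\}$ be the reduced Groebner basis of $I$ with respect to an elimination ordering for $x$. Let $q_i\in\mathbb{Z}_{\geq0}^{k+1}$ be the exponent of the leading monomial of $g_i$, let $K_{q_i}=q_i+\mathbb{Z}_{\geq0}^{k+1}$, and let $\overline{K_{q_i}}=\mathbb{Z}_{\geq0}^{k+1}\setminus K_{q_i}$. Let $\{x=0\}=\{(\sigma_0,\dots,\sigma_k)\in\mathbb{Z}^{k+1}_{\geq0}:\sigma_0=0\}$. Then: (1) the map $\mathcal{F}:G(S)\to\left[\bigcap_i\overline{K_{q_i}}\right]\setminus\{x=0\}$, $N\mapsto \exp(N_{\mathcal{B}}(x^N))$, is well defined and is a bijection; (2) the map $\mathcal{G}:S\to\left[\bigcap_i\overline{K_{q_i}}\right]\cap\{x=0\}$, $M\mapsto\exp(N_{\mathcal{B}}(x^M))$, is well defined and is a bijection.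
   Context: An elimination ordering for $x$ is a monomial order on $\mathbb{Q}[x,y_1,\dots,y_k]$ in which every monomial divisible by $x$ is greater than every monomial in $y_1,\dots,y_k$ only (e.g. lex with $x>y_1>\dots>y_k$). For a monomial $x^{\sigma_0}y_1^{\sigma_1}\cdots y_k^{\sigma_k}$, $\exp$ denotes its exponent vector $(\sigma_0,\sigma_1,\dots,\sigma_k)\in\mathbb{Z}^{k+1}_{\geq0}$. $N_{\mathcal{B}}(f)$ is the normal form of $f$ with respect to $\mathcal{B}$ (the unique remainder of $f$ on division by $\mathcal{B}$); for a monomial $x^N$ it is a monomial. *)

From HB Require Import structures.
From mathcomp Require Import all_boot all_order all_algebra.
From mathcomp Require Import mpoly.
From Stdlib Require Import ClassicalEpsilon.
Set Implicit Arguments. Unset Strict Implicit. Unset Printing Implicit Defensive.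
Import Order.TTheory GRing.Theory Num.Theory.
Local Open Scope ring_scope.

(* Variables of Q[x,y_1,...,y_k] are indexed by 'I_k.+1:
   index 0 is x, index (lift ord0 i) is y_(i+1).
   A monomial x^s0 y1^s1 ... yk^sk is 'X_[m] with m : 'X_{1..k.+1};
   its exponent vector exp is m itself. *)

Definition monomial_order n (le : rel 'X_{1..n}) : Prop :=
  (reflexive le /\ antisymmetric le /\ transitive le /\ total le) /\
  (forall m1 m2 m, le m1 m2 -> le (mnm_add m1 m) (mnm_add m2 m)) /\
  (forall m, le mnm0 m).

Definition elimination_order_x n (le : rel 'X_{1..n.+1}) : Prop :=
  forall m m' : 'X_{1..n.+1}, (0 < m ord0)%N -> m' ord0 = 0%N ->
    le m' m /\ m' != m.

(* Leading monomial of p w.r.t. le (mnm0 for p = 0). *)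
Definition lm n (le : rel 'X_{1..n}) (p : {mpoly rat[n]}) : 'X_{1..n} :=
  foldr (fun m acc => if le acc m then m else acc) mnm0 (msupp p).

Definition in_ideal n (gs : seq {mpoly rat[n]}) (f : {mpoly rat[n]}) : Prop :=
  exists cs : seq {mpoly rat[n]}, size cs = size gs /\
    f = \sum_(i < size gs) cs`_i * gs`_i.

(* B (listed without repetition) is the reduced Groebner basis, w.r.t. le,
   of the ideal generated by gens. (m1 <= m2)%MM, i.e. lem, is monomial
   divisibility. *)
Definition reduced_groebner n (le : rel 'X_{1..n})
    (gens B : seq {mpoly rat[n]}) : Prop :=
  [/\ uniq B,
      (forall g, g \in B -> g != 0 /\ in_ideal gens g),
      (forall f, in_ideal gens f -> f != 0 ->
          exists2 g, g \in B & lem (lm le g) (lm le f)),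
      (forall g, g \in B -> g@_(lm le g) = 1)
    & (forall g g', g \in B -> g' \in B -> g' != g ->
          forall m, m \in msupp g -> ~~ lem (lm le g') m)].

Definition is_remainder n (le : rel 'X_{1..n}) (B : seq {mpoly rat[n]})
    (f r : {mpoly rat[n]}) : Prop :=
  in_ideal B (f - r) /\
  (forall m, m \in msupp r -> forall g, g \in B -> ~~ lem (lm le g) m).

(* Normal form N_B(f): the (unique, when B is a Groebner basis) remainder. *)
Definition NF n (le : rel 'X_{1..n}) (B : seq {mpoly rat[n]})
    (f : {mpoly rat[n]}) : {mpoly rat[n]} :=
  epsilon (inhabits 0) (is_remainder le B f).

Definition in_semigroup k (a : 'I_k -> nat) (N : nat) : Prop :=
  exists c : 'I_k -> nat, N = (\sum_(i < k) c i * a i)%N.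

Definition toric_gens k (a : 'I_k -> nat) : seq {mpoly rat[k.+1]} :=
  [seq 'X_(lift ord0 i) - 'X_ord0 ^+ a i | i <- enum 'I_k].

(* Membership in the intersection of the complements of the K_{q_i}. *)
Definition outside_K n (le : rel 'X_{1..n}) (B : seq {mpoly rat[n]})
    (m : 'X_{1..n}) : Prop :=
  forall g, g \in B -> ~~ lem (lm le g) m.

From HB Require Import structures.
From mathcomp Require Import all_boot all_order all_algebra.
From mathcomp Require Import mpoly.
From Stdlib Require Import Classical ClassicalEpsilon.
Set Implicit Arguments. Unset Strict Implicit. Unset Printing Implicit Defensive.
Import Order.TTheory GRing.Theory Num.Theory.
Local Open Scope ring_scope.

(* Substituting x -> t and y_i -> t^(a_i) kills the toric ideal I, and
   X^m = x^(w m) modulo I for the weight w m = m_0 + sum_i a_i m_i.  Two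
   distinct standard monomials (outside every K_(q_i)) of equal weight would
   give a binomial of I whose leading monomial, one of the two, is divisible
   by some lm(g_i); hence standard monomials have pairwise distinct weights.
   Normal forms exist by the division algorithm, which terminates because a
   monomial order is well-founded (Dickson's lemma).  The normal form of x^N
   is a combination of standard monomials that the substitution sends to t^N,
   so it is the unique standard monomial of weight N.  This monomial is free
   of x iff some x-free monomial has weight N, i.e. iff N lies in S: for the
   elimination order, a monomial containing x is the leading one of its
   binomial with an x-free monomial of the same weight. *)

Lemma exists_argmin (P : nat -> Prop) (g : nat -> nat) j0 :
  P j0 -> exists2 j, P j & forall j', P j' -> (g j <= g j')%N.
Proof.
have [v lt_g] := ubnP (g j0); elim: v j0 lt_g => // v IHv j0 lt_g Pj0.
case: (classic (exists2 j', P j' & (g j' < g j0)%N)) => [[j' Pj' lt_j'] | no_less].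
  exact: IHv j' (leq_trans lt_j' lt_g) Pj'.
exists j0 => // j' Pj'; rewrite leqNgt; apply/negP => lt_j'.
by apply: no_less; exists j'.
Qed.

Lemma nondecreasing_subsequence (g : nat -> nat) : exists phi : nat -> nat,
  {homo phi : i j / (i < j)%N} /\ {homo g \o phi : i j / (i <= j)%N}.
Proof.
pose argmin_from s j := (s <= j)%N /\ forall j', (s <= j')%N -> (g j <= g j')%N.
have [m mP] : exists m : nat -> nat, forall s, argmin_from s (m s).
  apply: choice => s.
  by have [j sj jmin] := exists_argmin (P := fun j => (s <= j)%N) g (leqnn s); exists j.
pose s i := iter i (fun s => (m s).+1) 0%N.
have s_le_ms i : (s i <= m (s i))%N by case: (mP (s i)).
have ms_lt_sS i : (m (s i) < s i.+1)%N by [].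
exists (m \o s); split.
  apply: homo_ltn => [j i l|i]; first exact: ltn_trans.
  exact: leq_trans (ms_lt_sS i) (s_le_ms i.+1).
apply: homo_leq => [//|j i l|i /=]; first exact: leq_trans.
apply: (proj2 (mP _)); apply: leq_trans (s_le_ms i) _.
exact: ltnW (leq_trans (ms_lt_sS i) (s_le_ms i.+1)).
Qed.

Lemma dickson n (f : nat -> 'X_{1..n}) : exists i j, (i < j)%N /\ (f i <= f j)%MM.
Proof.
have monotone_on (l : seq 'I_n) : exists phi : nat -> nat, {homo phi : i j / (i < j)%N} /\
    forall c, c \in l -> {homo (fun i => f (phi i) c) : i j / (i <= j)%N}.
  elim: l => [|c l [phi [phi_incr phi_mono]]]; first by exists id; split.
  have [psi [psi_incr psi_mono]] := nondecreasing_subsequence (fun i => f (phi i) c).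
  exists (phi \o psi); split=> [i j lt_ij|c']; first exact: phi_incr (psi_incr _ _ lt_ij).
  rewrite inE => /predU1P [-> //|c'l] i j le_ij /=.
  apply: phi_mono => //; move: le_ij; rewrite leq_eqVlt => /predU1P [-> //|/psi_incr].
  exact: ltnW.
have [phi [phi_incr phi_mono]] := monotone_on (enum 'I_n).
exists (phi 0%N), (phi 1%N); split; first exact: phi_incr.
by apply/mnm_lepP => c; apply: phi_mono; rewrite ?mem_enum.
Qed.

Lemma mpolyXB_eq0 n (m1 m2 : 'X_{1..n}) :
  ('X_[m1] - 'X_[m2] == 0 :> {mpoly rat[n]}) = (m1 == m2).
Proof.
apply/eqP/eqP => [/(congr1 (mcoeff m1))|->]; last exact: subrr.
by rewrite mcoeffB !mcoeffX mcoeff0 eqxx; case: eqP.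
Qed.

Section MonomialOrder.
Variables (n : nat) (le : rel 'X_{1..n}).
Hypothesis hle : monomial_order le.

Local Notation lt := (fun m1 m2 => le m1 m2 && (m1 != m2)).

Lemma mo_anti m1 m2 : le m1 m2 -> le m2 m1 -> m1 = m2.
Proof. by case: hle => [[_ [anti _]] _] l12 l21; apply: anti; rewrite l12 l21. Qed.

Lemma mo_lt_trans m1 m2 m3 : lt m1 m2 -> lt m2 m3 -> lt m1 m3.
Proof.
case: hle => [[_ [_ [trans _]]] _] /andP [l12 n12] /andP [l23 n23].
rewrite (trans _ _ _ l12 l23); apply: contra n12 => /eqP e13.
by move: l23; rewrite -e13 => l21; rewrite (mo_anti l12 l21).
Qed.

Lemma mo_le_of_lem m1 m2 : (m1 <= m2)%MM -> le m1 m2.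
Proof.
case: hle => _ [compat le0] /submK <-.
by rewrite -{1}(add0m m1); apply: compat; apply: le0.
Qed.

Lemma monomial_order_wf : well_founded lt.
Proof.
(* A descending chain, built by choice, contradicts Dickson's lemma: some
   term divides, hence is below, a later one. *)
move=> m0; apply: NNPP => nacc0.
pose descent m m' := ~ Acc lt m -> lt m' m /\ ~ Acc lt m'.
have [down downP] : exists down, forall m, descent m (down m).
  apply: choice => m; case: (classic (Acc lt m)) => [acc|nacc]; first by exists m.
  apply: NNPP => nodown; apply: nacc; constructor => m' lt_m'm.
  by apply: NNPP => nacc'; apply: nodown; exists m'.
pose sq i := iter i down m0.
have nacc_sq i : ~ Acc lt (sq i) by elim: i => //= i /downP [].
have sq_decr : {homo sq : i j / (i < j)%N >-> lt j i}.
  apply: homo_ltn => [m2 m1 m3 l21 l32|i]; first exact: mo_lt_trans l32 l21.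
  by have [] := downP _ (nacc_sq i).
have [i [j [lt_ij /mo_le_of_lem le_ij]]] := dickson sq.
have /andP [le_ji] := sq_decr _ _ lt_ij.
by rewrite (mo_anti le_ij le_ji) eqxx.
Qed.

Lemma lm_msupp (p : {mpoly rat[n]}) : p != 0 -> lm le p \in msupp p.
Proof.
rewrite -msupp_eq0 /lm; case: hle => _ [_ le0].
elim: (msupp p) => [//|m s IHs] _ /=.
case: s IHs => [|m' s] IHs /=; first by rewrite le0 inE eqxx.
have /(_ isT) := IHs; set F := foldr _ _ _ => F_in.
by case: ifP => _; rewrite inE ?eqxx // F_in orbT.
Qed.

Lemma msupp_le_lm (p : {mpoly rat[n]}) m : m \in msupp p -> le m (lm le p).
Proof.
rewrite /lm; case: hle => [[refl [_ [trans tot]]] _].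
elim: (msupp p) => [//|m' s IHs] /=; set F := foldr _ _ _.
rewrite inE => /predU1P [->|m_in].
  by case: ifP => [_|h]; [apply: refl | case/orP: (tot F m'); rewrite ?h].
by case: ifP => [h|_]; [apply: trans (IHs m_in) h | apply: IHs].
Qed.

Lemma lm_binomial m1 m2 : m1 != m2 ->
  lm le ('X_[m1] - 'X_[m2] : {mpoly rat[n]}) = if le m1 m2 then m2 else m1.
Proof.
set f := _ - _ => ne12.
have f_neq0 : f != 0 by rewrite mpolyXB_eq0.
have [f1 f2] : f@_m1 = 1 /\ f@_m2 = -1.
  by rewrite !mcoeffB !mcoeffX !eqxx (negbTE ne12) eq_sym (negbTE ne12) subr0 sub0r.
have m1_in : m1 \in msupp f by rewrite mcoeff_msupp f1 oner_neq0.
have m2_in : m2 \in msupp f by rewrite mcoeff_msupp f2 oppr_eq0 oner_neq0.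
have /msuppB_le := lm_msupp f_neq0; rewrite !msuppX mem_cat !inE => /orP [] /eqP lmE.
  case: ifP => // le12; rewrite lmE; apply: mo_anti le12 _.
  by rewrite -lmE; apply: msupp_le_lm.
case: ifP => // /negbT nle12; have := msupp_le_lm m1_in.
by rewrite lmE (negbTE nle12).
Qed.

End MonomialOrder.

Section Ideal.
Variable n : nat.
Implicit Types (gs hs : seq {mpoly rat[n]}) (f g h p q : {mpoly rat[n]}).

Lemma in_idealP gs f : in_ideal gs f <->
  exists c : nat -> {mpoly rat[n]}, f = \sum_(i < size gs) c i * gs`_i.
Proof.
split=> [[cs [_ ->]]|[c ->]]; first by exists (nth 0 cs).
exists (mkseq c (size gs)); rewrite size_mkseq; split=> //.
by apply: eq_bigr => i _; rewrite nth_mkseq.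
Qed.

Lemma in_ideal0 gs : in_ideal gs 0.
Proof. by apply/in_idealP; exists (fun=> 0); rewrite big1 // => i _; rewrite mul0r. Qed.

Lemma in_idealD gs f g : in_ideal gs f -> in_ideal gs g -> in_ideal gs (f + g).
Proof.
move=> /in_idealP [c1 ->] /in_idealP [c2 ->]; apply/in_idealP.
by exists (fun i => c1 i + c2 i); rewrite -big_split; apply: eq_bigr => i _; rewrite mulrDl.
Qed.

Lemma in_idealMl gs h f : in_ideal gs f -> in_ideal gs (h * f).
Proof.
move=> /in_idealP [c ->]; apply/in_idealP; exists (fun i => h * c i).
by rewrite mulr_sumr; apply: eq_bigr => i _; rewrite mulrA.
Qed.

Lemma in_idealMr gs h f : in_ideal gs f -> in_ideal gs (f * h).
Proof. by rewrite mulrC; apply: in_idealMl. Qed.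

Lemma in_idealZ gs (c : rat) f : in_ideal gs f -> in_ideal gs (c *: f).
Proof. by rewrite -mul_mpolyC; apply: in_idealMl. Qed.

Lemma in_idealB gs f g : in_ideal gs f -> in_ideal gs g -> in_ideal gs (f - g).
Proof. by move=> If Ig; rewrite -scaleN1r; apply/in_idealD/in_idealZ. Qed.

Lemma mem_in_ideal gs g : g \in gs -> in_ideal gs g.
Proof.
move=> g_in; apply/in_idealP; exists (fun i => (i == index g gs)%:R).
have lt_g : (index g gs < size gs)%N by rewrite index_mem.
rewrite (bigD1 (Ordinal lt_g)) //= eqxx mul1r nth_index // big1 ?addr0 // => i ne_i.
by rewrite -val_eqE /= in ne_i; rewrite (negbTE ne_i) mul0r.
Qed.

Lemma in_ideal_trans gs hs f : (forall g, g \in gs -> in_ideal hs g) ->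
  in_ideal gs f -> in_ideal hs f.
Proof.
move=> gs_hs /in_idealP [c ->].
apply: (big_ind (in_ideal hs)); [exact: in_ideal0 | exact: in_idealD |].
by move=> i _; apply/in_idealMl/gs_hs/mem_nth.
Qed.

Lemma in_ideal_congrM gs p1 p2 q1 q2 : in_ideal gs (p1 - p2) -> in_ideal gs (q1 - q2) ->
  in_ideal gs (p1 * q1 - p2 * q2).
Proof.
have -> : p1 * q1 - p2 * q2 = p1 * (q1 - q2) + (p1 - p2) * q2.
  by rewrite mulrBr mulrBl addrA subrK.
by move=> Ip Iq; apply: in_idealD; [apply: in_idealMl | apply: in_idealMr].
Qed.

Lemma in_ideal_congrX gs p q e : in_ideal gs (p - q) -> in_ideal gs (p ^+ e - q ^+ e).
Proof.
move=> Ipq; elim: e => [|e IHe]; first by rewrite !expr0 subrr; apply: in_ideal0.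
by rewrite !exprS; apply: in_ideal_congrM.
Qed.

End Ideal.

Section Division.
Variables (n : nat) (le : rel 'X_{1..n}) (B : seq {mpoly rat[n]}).
Hypotheses (hle : monomial_order le) (B_neq0 : forall g, g \in B -> g != 0).

Local Notation is_rem := (is_remainder le B).

Lemma is_remainderD f1 f2 r1 r2 :
  is_rem f1 r1 -> is_rem f2 r2 -> is_rem (f1 + f2) (r1 + r2).
Proof.
move=> [I1 S1] [I2 S2]; split; first by rewrite opprD addrACA; apply: in_idealD.
by move=> m /msuppD_le; rewrite mem_cat => /orP [/S1|/S2].
Qed.

Lemma is_remainderZ c f r : is_rem f r -> is_rem (c *: f) (c *: r).
Proof.
move=> [I S]; split=> [|m /msuppZ_le /S //].
by rewrite -scalerBr; apply: in_idealZ.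
Qed.

Lemma is_remainder_ideal f : in_ideal B f -> is_rem f 0.
Proof. by move=> If; split=> [|m]; rewrite ?subr0 ?msupp0. Qed.

Lemma exists_remainder_mpolyX m : exists r, is_rem 'X_[m] r.
Proof.
elim/(well_founded_ind (monomial_order_wf hle)): m => m IHm.
case: (classic (outside_K le B m)) => [std_m|not_std].
  exists 'X_[m]; split=> [|m']; first by rewrite subrr; apply: in_ideal0.
  by rewrite msuppX inE => /eqP ->.
have [g g_in q_m] : exists2 g, g \in B & (lm le g <= m)%MM.
  by apply: NNPP => nodiv; apply: not_std => g g_in; apply/negP => q_m; apply: nodiv; exists g.
set q := lm le g in q_m; set u := (m - q)%MM; set c := g@_q.
have mE : m = (u + q)%MM by rewrite submK.
have q_in : q \in msupp g by apply/lm_msupp/B_neq0.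
pose S := \sum_(q' <- msupp g | q' != q) g@_q' *: ('X_[u + q'] : {mpoly rat[n]}).
have gE : 'X_[u] * g = c *: 'X_[m] + S.
  rewrite {1}(mpolyE g) mulr_sumr (bigD1_seq q) ?msupp_uniq //= mE.
  by congr (_ + _); [|apply: eq_bigr => q' _]; rewrite -scalerAr -mpolyXD.
have [rS rSP] : exists r, is_rem S r.
  rewrite /S big_seq_cond; apply: (big_ind (fun f => exists r, is_rem f r)).
  - by exists 0; apply/is_remainder_ideal/in_ideal0.
  - by move=> f1 f2 [r1 ?] [r2 ?]; exists (r1 + r2); apply: is_remainderD.
  move=> q' /andP [q'_in ne_q'q]; have [r rP] : exists r, is_rem 'X_[u + q'] r.
    apply: IHm; rewrite mE eqm_add2l ne_q'q andbT addmC [(u + q)%MM]addmC.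
    by case: hle => _ [compat _]; apply/compat/msupp_le_lm.
  by exists (g@_q' *: r); apply: is_remainderZ.
have c_neq0 : c != 0 by rewrite -mcoeff_msupp.
have -> : 'X_[m] = c^-1 *: ('X_[u] * g + (-1) *: S).
  by rewrite gE scaleN1r addrK scalerA mulVf // scale1r.
exists (c^-1 *: (0 + (-1) *: rS)); apply/is_remainderZ/is_remainderD.
  by apply/is_remainder_ideal/in_idealMl/mem_in_ideal.
exact: is_remainderZ.
Qed.

End Division.

Section WeightedSubstitution.
Variables (n : nat) (w : 'I_n -> nat).

Definition wdeg (m : 'X_{1..n}) : nat := (\sum_(i < n) w i * m i)%N.

Definition wsubst : {mpoly rat[n]} -> {poly rat} := mmap (@polyC rat) (fun i => 'X^(w i)).
HB.instance Definition _ := GRing.RMorphism.on wsubst.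

Lemma wdegU i : wdeg U_(i)%MM = w i.
Proof.
rewrite /wdeg (bigD1 i) //= mnm1E eqxx muln1 big1 ?addn0 // => j ne_ji.
by rewrite mnm1E eq_sym (negbTE ne_ji) muln0.
Qed.

Lemma mmap1_wsubst m : mmap1 (fun i => 'X^(w i)) m = 'X^(wdeg m) :> {poly rat}.
Proof. by rewrite /mmap1 /wdeg; under eq_bigr do rewrite -exprM; rewrite prodrXr. Qed.

Lemma wsubstX m : wsubst 'X_[m] = 'X^(wdeg m).
Proof. by rewrite /wsubst mmapX mmap1_wsubst. Qed.

Lemma coef_wsubst p N : (wsubst p)`_N = \sum_(m <- msupp p | wdeg m == N) p@_m.
Proof.
rewrite /wsubst /mmap coef_sum [RHS]big_mkcond; apply: eq_bigr => m _.
by rewrite mmap1_wsubst coefCM coefXn eq_sym; case: eqP; rewrite ?mulr1 ?mulr0.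
Qed.

End WeightedSubstitution.

Section ToricIdeal.
Variables (k : nat) (a : 'I_k -> nat).

Local Notation gens := (toric_gens a).

Definition toric_weight (i : 'I_k.+1) : nat :=
  if unlift ord0 i is Some j then a j else 1%N.

Local Notation w := (wdeg toric_weight).

Lemma toric_weight0 : toric_weight ord0 = 1%N.
Proof. by rewrite /toric_weight unlift_none. Qed.

Lemma toric_weightS j : toric_weight (lift ord0 j) = a j.
Proof. by rewrite /toric_weight liftK. Qed.

Lemma wdeg_toricE m : w m = (m ord0 + \sum_(j < k) a j * m (lift ord0 j))%N.
Proof.
rewrite /wdeg big_ord_recl toric_weight0 mul1n.
by congr addn; apply: eq_bigr => j _; rewrite toric_weightS.
Qed.

Lemma wsubst_xpow N : wsubst toric_weight ('X_ord0 ^+ N) = 'X^N.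
Proof. by rewrite rmorphXn /= wsubstX wdegU toric_weight0. Qed.

Lemma wsubst_toric_ideal f : in_ideal gens f -> wsubst toric_weight f = 0.
Proof.
move=> /in_idealP [c ->]; rewrite rmorph_sum big1 // => i _.
have /mapP [j _ ->] : gens`_i \in gens by apply: mem_nth.
rewrite rmorphM rmorphB rmorphXn /= !wsubstX !wdegU toric_weightS toric_weight0.
by rewrite subrr mulr0.
Qed.

Lemma in_toric_ideal_mpolyX_xpow m : in_ideal gens ('X_[m] - 'X_ord0 ^+ w m).
Proof.
have var_congr i : in_ideal gens ('X_i - 'X_ord0 ^+ toric_weight i).
  case: (unliftP ord0 i) => [j ->|->]; last first.
    by rewrite toric_weight0 expr1 subrr; apply: in_ideal0.
  by rewrite toric_weightS; apply/mem_in_ideal/map_f; rewrite mem_enum.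
rewrite mpolyXE_id /wdeg -prodrXr.
apply: (big_ind2 (fun p q => in_ideal gens (p - q))) => [||i _].
- by rewrite subrr; apply: in_ideal0.
- by move=> p1 q1 p2 q2; apply: in_ideal_congrM.
by rewrite exprM; apply: in_ideal_congrX.
Qed.

Lemma in_toric_ideal_binomial m1 m2 : w m1 = w m2 -> in_ideal gens ('X_[m1] - 'X_[m2]).
Proof.
move=> w12; have -> : 'X_[m1] - 'X_[m2] =
    ('X_[m1] - 'X_ord0 ^+ w m1) - ('X_[m2] - 'X_ord0 ^+ w m2) :> {mpoly rat[k.+1]}.
  by rewrite w12 opprB addrA subrK.
by apply: in_idealB; apply: in_toric_ideal_mpolyX_xpow.
Qed.

End ToricIdeal.

Section ToricNormalForm.
Variables (k : nat) (a : 'I_k -> nat) (le : rel 'X_{1..k.+1}) (B : seq {mpoly rat[k.+1]}).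
Hypotheses (hle : monomial_order le) (helim : elimination_order_x le)
  (hB : reduced_groebner le (toric_gens a) B).

Local Notation std := (outside_K le B).
Local Notation w := (wdeg (toric_weight a)).

Lemma groebner_neq0 g : g \in B -> g != 0.
Proof. by case: hB => _ B_gens _ _ _ /B_gens []. Qed.

Lemma groebner_in_toric_ideal f : in_ideal B f -> in_ideal (toric_gens a) f.
Proof. by case: hB => _ B_gens _ _ _; apply: in_ideal_trans => g /B_gens []. Qed.

Lemma binomial_max_not_std m1 m2 : m1 != m2 -> w m1 = w m2 ->
  ~ std (if le m1 m2 then m2 else m1).
Proof.
move=> ne12 w12 std_max; case: hB => _ _ groebner _ _.
have := groebner _ (in_toric_ideal_binomial w12); rewrite mpolyXB_eq0 => /(_ ne12) [g g_in].
by rewrite (lm_binomial hle ne12) (negbTE (std_max g g_in)).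
Qed.

Lemma std_wdeg_inj m1 m2 : std m1 -> std m2 -> w m1 = w m2 -> m1 = m2.
Proof.
move=> std1 std2 w12; apply/eqP/negP => /negP ne12.
by apply: (binomial_max_not_std ne12 w12); case: ifP.
Qed.

Lemma std_x_free s m : std s -> w s = w m -> m ord0 = 0%N -> s ord0 = 0%N.
Proof.
move=> std_s w_sm m0; apply/eqP; rewrite -leqn0 leqNgt; apply/negP => s0.
have [le_ms ne_ms] := helim s0 m0.
have le_sm_F : le s m = false.
  by apply: contraNF ne_ms => le_sm; rewrite (mo_anti hle le_ms le_sm).
have ne_sm : s != m by rewrite eq_sym.
by apply: (binomial_max_not_std ne_sm w_sm); rewrite le_sm_F.
Qed.

Lemma in_semigroup_std s : std s -> in_semigroup a (w s) <-> s ord0 = 0%N.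
Proof.
move=> std_s; split=> [[c w_s]|s0].
  pose m := [multinom if unlift ord0 i is Some j then c j else 0%N | i < k.+1].
  apply: (std_x_free std_s) (_ : m ord0 = 0%N); last by rewrite mnmE unlift_none.
  rewrite w_s wdeg_toricE mnmE unlift_none add0n.
  by apply: eq_bigr => j _; rewrite mnmE liftK mulnC.
exists (fun j => s (lift ord0 j)).
by rewrite wdeg_toricE s0 add0n; apply: eq_bigr => j _; rewrite mulnC.
Qed.

Lemma coef_std_wsubst (r : {mpoly rat[k.+1]}) m :
  (forall m', m' \in msupp r -> std m') -> m \in msupp r ->
  r@_m = (wsubst (toric_weight a) r)`_(w m).
Proof.
move=> std_r m_in; rewrite coef_wsubst (big_rem m) ?eqxx //= big1_seq ?addr0 //.
move=> m' /andP [/eqP w_eq]; rewrite mem_rem_uniq ?msupp_uniq // => /andP [ne m'_in].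
by move: ne; rewrite (std_wdeg_inj (std_r _ m'_in) (std_r _ m_in) w_eq) eqxx.
Qed.

Lemma remainder_xpow N r : is_remainder le B ('X_ord0 ^+ N) r ->
  exists s, [/\ std s, w s = N & r = 'X_[s]].
Proof.
move=> [I_r std_r]; have {}std_r m : m \in msupp r -> std m by move/std_r.
have subst_r : wsubst (toric_weight a) r = 'X^N.
  apply/eqP; rewrite eq_sym -subr_eq0 -(wsubst_xpow a) -rmorphB.
  by apply/eqP/wsubst_toric_ideal/groebner_in_toric_ideal.
have coef_r m : m \in msupp r -> r@_m = (w m == N)%:R.
  by move=> m_in; rewrite (coef_std_wsubst std_r m_in) subst_r coefXn.
have wdeg_r m : m \in msupp r -> w m = N.
  move=> m_in; have := m_in; rewrite mcoeff_msupp coef_r //.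
  by case: (w m =P N); rewrite ?eqxx.
have r_neq0 : r != 0.
  apply/eqP => r0; move: subst_r; rewrite r0 rmorph0 => /esym/eqP.
  exact/negP/monic_neq0/monicXn.
have s_in := lm_msupp hle r_neq0; set s := lm le r in s_in.
exists s; split; [exact: std_r | exact: wdeg_r |].
apply/mpolyP => m; rewrite mcoeffX; case: (boolP (m \in msupp r)) => [m_in|m_nin].
  rewrite coef_r // wdeg_r // eqxx eq_sym.
  by rewrite (std_wdeg_inj (std_r _ m_in) (std_r _ s_in)) ?eqxx ?wdeg_r.
by rewrite memN_msupp_eq0 //; case: eqP m_nin => // <-; rewrite s_in.
Qed.

Lemma NF_xpow N : exists s, [/\ std s, w s = N & NF le B ('X_ord0 ^+ N) = 'X_[s]].
Proof.
(* [NF] is an epsilon-choice of remainder: one has to be exhibited first. *)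
have [r r_rem] : exists r, is_remainder le B ('X_ord0 ^+ N) r.
  by rewrite mpolyXn; apply/exists_remainder_mpolyX/groebner_neq0.
exact/remainder_xpow/(epsilon_spec _ _ (ex_intro _ r r_rem)).
Qed.

Lemma toric_normal_form_map : exists F : nat -> 'X_{1..k.+1},
  [/\ forall N, NF le B ('X_ord0 ^+ N) = 'X_[F N] /\ std (F N),
      injective F,
      forall m, std m -> F (w m) = m
    & forall N, in_semigroup a N <-> F N ord0 = 0%N].
Proof.
pose std_of_wdeg N s := std s /\ w s = N.
have [F FP] : exists F : nat -> 'X_{1..k.+1}, forall N, std_of_wdeg N (F N).
  by apply: choice => N; have [s [std_s w_s _]] := NF_xpow N; exists s.
exists F; split=> [N|N1 N2 eq_F|m std_m|N].
- have [std_F w_F] := FP N; have [s [std_s w_s ->]] := NF_xpow N; split=> //.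
  by rewrite (std_wdeg_inj std_s std_F) // w_s w_F.
- by rewrite -(proj2 (FP N1)) -(proj2 (FP N2)) eq_F.
- by have [std_F w_F] := FP (w m); apply: std_wdeg_inj.
by have [std_F w_F] := FP N; rewrite -(in_semigroup_std std_F) w_F.
Qed.

End ToricNormalForm.

Theorem mainTheorem5 (k : nat) (a : 'I_k -> nat)
  (hgcd : (\big[gcdn/0%N]_(i < k) a i)%N = 1%N)
  (le : rel 'X_{1..k.+1}) (hle : monomial_order le)
  (helim : elimination_order_x le)
  (B : seq {mpoly rat[k.+1]}) (hB : reduced_groebner le (toric_gens a) B) :
  (* (1) F : G(S) -> [cap_i complement K_{q_i}] \ {x = 0} *)
  (exists F : nat -> 'X_{1..k.+1},
     (forall N, ~ in_semigroup a N ->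
        NF le B ('X_ord0 ^+ N) = 'X_[F N] /\
        outside_K le B (F N) /\ F N ord0 <> 0%N) /\
     (forall N1 N2, ~ in_semigroup a N1 -> ~ in_semigroup a N2 ->
        F N1 = F N2 -> N1 = N2) /\
     (forall m, outside_K le B m -> m ord0 <> 0%N ->
        exists N, ~ in_semigroup a N /\ F N = m)) /\
  (* (2) G : S -> [cap_i complement K_{q_i}] cap {x = 0} *)
  (exists G : nat -> 'X_{1..k.+1},
     (forall M, in_semigroup a M ->
        NF le B ('X_ord0 ^+ M) = 'X_[G M] /\
        outside_K le B (G M) /\ G M ord0 = 0%N) /\
     (forall M1 M2, in_semigroup a M1 -> in_semigroup a M2 ->
        G M1 = G M2 -> M1 = M2) /\
     (forall m, outside_K le B m -> m ord0 = 0%N ->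
        exists M, in_semigroup a M /\ G M = m)).
Proof.
have [F [NF_F F_inj F_wdeg S_F]] := toric_normal_form_map hle helim hB.
split; exists F; (split; [move=> N SN | split=> [N1 N2 _ _|m std_m m0]]).
- by have [NF_N std_N] := NF_F N; do 2?split=> //; move/S_F.
- exact: F_inj.
- exists (wdeg (toric_weight a) m); rewrite F_wdeg //.
  by split=> // /S_F; rewrite F_wdeg.
- by have [NF_N std_N] := NF_F N; do 2?split=> //; apply/S_F.
- exact: F_inj.
- exists (wdeg (toric_weight a) m); rewrite F_wdeg //.
  by split=> //; apply/S_F; rewrite F_wdeg.
Qed.
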